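(* In a multi-channel single-hop radio network with $b$ channels in which at most $k$ stations are activated spontaneously (at arbitrary times), the randomized algorithm Channel-Screening — in which, in every round, each active station independently for each channel $\beta\in\{1,\dots,b\}$ transmits on channel $\beta$ with probability $k^{-\beta/b}$, until a message is heard on some channel — wakes up the network within $\mathcal O(k^{1/b}\ln\frac{1}{\epsilon})$ time steps (counted from the first spontaneous activation) with probability at least $1-\epsilon$, for every $0<\epsilon<1$.
   Context: Model: $n$ stations and $b$ channels numbered $1,\dots,b$; time is divided into synchronous rounds; each active station may transmit on any subset of channels per round and all stations listen to all channels. A message on a channel in a round is heard by all stations iff exactly one station transmits on that channel in that round; there is no collision detection. Initially all stations are passive; at most $k$ stations become active spontaneously at arbitrary time steps; $k$ and $b$ are known, $n$ need not be. The network is woken up at the first time step at which some channel carries a transmission of exactly one station. All random choices are independent. *)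

From HB Require Import structures.
From mathcomp Require Import all_boot all_order all_algebra.
From mathcomp Require Import reals exp Rstruct.
Set Implicit Arguments. Unset Strict Implicit. Unset Printing Implicit Defensive.
Import Order.TTheory GRing.Theory Num.Theory.
Local Open Scope ring_scope.

Notation RR := Rdefinitions.R.

(* Transmission probability on channel beta+1 (channels numbered 1..b,
   represented by beta : 'I_b): k^{-(beta+1)/b}. *)
Definition chan_prob (k b : nat) (beta : 'I_b) : RR :=
  powR (k%:R) (- ((beta.+1)%:R / b%:R)).

(* Activation pattern: act i = Some a  iff station i becomes active
   (spontaneously) at time step a; None = never activated. *)
Definition active (n : nat) (act : 'I_n -> option nat) (i : 'I_n) (t : nat) : bool :=
  if act i is Some a then (a <= t)%N else false.

(* Outcome of all random choices for rounds 0..N-1: omega (i, t, beta) = true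
   iff station i, if active in round t, transmits on channel beta+1. *)
Definition outcome (n N b : nat) := {ffun 'I_n * 'I_N * 'I_b -> bool}.

Definition weight (n N k b : nat) (omega : outcome n N b) : RR :=
  \prod_(x : 'I_n * 'I_N * 'I_b)
     (if omega x then chan_prob k x.2 else 1 - chan_prob k x.2).

Definition heard (n N b : nat) (act : 'I_n -> option nat) (omega : outcome n N b)
  (t : 'I_N) (beta : 'I_b) : bool :=
  #|[set i : 'I_n | active act i t && omega (i, t, beta)]| == 1%N.

Definition woken_within (n N b : nat) (act : 'I_n -> option nat)
  (omega : outcome n N b) : bool :=
  [exists t : 'I_N, exists beta : 'I_b, heard act omega t beta].

Definition prob_woken (n N k b : nat) (act : 'I_n -> option nat) : RR :=
  \sum_(omega : outcome n N b | woken_within act omega) weight k omega.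

From HB Require Import structures.
From mathcomp Require Import all_boot all_order all_algebra.
From mathcomp Require Import reals exp Rstruct sequences.
From mathcomp Require Import ring lra.
Set Implicit Arguments. Unset Strict Implicit. Unset Printing Implicit Defensive.
Import Order.TTheory GRing.Theory Num.Theory.
Local Open Scope ring_scope.

(* In every round from t0 on, the set A of active stations has 1 <= #|A| <= k.
   For the least channel j with #|A| <= k^(j/b), the transmission probability
   p = k^(-j/b) satisfies k^(-1/b) <= #|A| p <= 1, so exactly one station of A
   transmits on channel j with probability #|A| p (1-p)^(#|A|-1) >= k^(-1/b)/e.
   Rounds are independent, hence the network still sleeps after rounds
   t0..t0+T with probability at most (1 - k^(-1/b)/e)^(T+1)
   <= exp(-(T+1) k^(-1/b)/e), which is at most eps as soon as
   T+1 >= e k^(1/b) ln(1/eps); so C = e works. *)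

Lemma prodr_if0 (R : comPzSemiRingType) (I : finType) (P : pred I) (F : I -> R) :
  \prod_i (if P i then F i else 0) = if [forall i, P i] then \prod_i F i else 0.
Proof.
case: ifP => [/forallP PI | /negbT].
  by apply: eq_bigr => i _; rewrite PI.
rewrite negb_forall => /existsP [i /negbTE Pi].
by rewrite (bigD1 i) //= Pi mul0r.
Qed.

Section BernoulliProduct.
Variables (I : finType) (p : I -> RR).

Definition bern_weight (s : {ffun I -> bool}) : RR :=
  \prod_x (if s x then p x else 1 - p x).

Lemma bern_weight_ge0 s : (forall x, 0 <= p x <= 1) -> 0 <= bern_weight s.
Proof.
move=> p01; apply: prodr_ge0 => x _; have /andP[p0 p1] := p01 x.
by case: (s x); rewrite ?subr_ge0.
Qed.

Lemma sum_bern_weight : \sum_s bern_weight s = 1.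
Proof.
transitivity (\prod_x \sum_(c : bool) (if c then p x else 1 - p x)).
  by rewrite bigA_distr_bigA.
by apply: big1 => x _; rewrite big_bool /= addrC subrK.
Qed.

Lemma sum_bern_weight_predC (P : pred {ffun I -> bool}) :
  \sum_(s | ~~ P s) bern_weight s = 1 - \sum_(s | P s) bern_weight s.
Proof. by rewrite -sum_bern_weight [X in _ = X - _](bigID P) /= addrC addrK. Qed.

Lemma sum_bern_weight_cylinder (S : {pred I}) (v : I -> bool) :
  \sum_(s : {ffun I -> bool} | [forall x in S, s x == v x]) bern_weight s =
  \prod_(x in S) (if v x then p x else 1 - p x).
Proof.
rewrite big_mkcond [RHS]big_mkcond /=.
transitivity (\prod_x \sum_(c : bool)
    ((if x \in S then (c == v x)%:R else 1) * (if c then p x else 1 - p x))).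
  rewrite bigA_distr_bigA /=; apply: eq_bigr => s _.
  case: ifP => [/forall_inP sSv | /negbT].
    apply: eq_bigr => x _; have [xS|_] := boolP (x \in S); last by rewrite mul1r.
    by rewrite (eqP (sSv x xS)) eqxx mul1r.
  rewrite negb_forall_in => /exists_inP [x xS /negbTE svx].
  by rewrite (bigD1 x) //= xS svx !mul0r.
apply: eq_bigr => x _; rewrite big_bool /=.
by case: (x \in S); case: (v x); rewrite /= ?mul1r ?mul0r ?add0r ?addr0 // addrC subrK.
Qed.

Lemma sum_bern_weight_itv (P : pred {ffun I -> bool}) :
  (forall x, 0 <= p x <= 1) -> 0 <= \sum_(s | P s) bern_weight s <= 1.
Proof.
move=> p01; have w0 s : 0 <= bern_weight s by apply: bern_weight_ge0.
rewrite sumr_ge0 //= -subr_ge0 -sum_bern_weight_predC.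
by apply: sumr_ge0.
Qed.

End BernoulliProduct.

Section Rounds.
Variables (n b : nat).

Definition round_outcome := {ffun 'I_n * 'I_b -> bool}.

Definition outcome_of_rounds N (f : {ffun 'I_N -> round_outcome}) : outcome n N b :=
  [ffun x => f x.1.2 (x.1.1, x.2)].

Definition rounds_of_outcome N (om : outcome n N b) : {ffun 'I_N -> round_outcome} :=
  [ffun t => [ffun x => om (x.1, t, x.2)]].

Lemma outcome_of_roundsK N : cancel (@outcome_of_rounds N) (@rounds_of_outcome N).
Proof. by move=> f; apply/ffunP => t; apply/ffunP => -[i be]; rewrite !ffunE. Qed.

Lemma rounds_of_outcomeK N : cancel (@rounds_of_outcome N) (@outcome_of_rounds N).
Proof. by move=> om; apply/ffunP => -[[i t] be]; rewrite !ffunE. Qed.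

Definition round_weight k (u : round_outcome) : RR :=
  bern_weight (fun x : 'I_n * 'I_b => chan_prob k x.2) u.

Lemma weight_outcome_of_rounds N k (f : {ffun 'I_N -> round_outcome}) :
  weight k (outcome_of_rounds f) = \prod_t round_weight k (f t).
Proof.
pose w (t : 'I_N) (i : 'I_n) (be : 'I_b) :=
  if f t (i, be) then chan_prob k be else 1 - chan_prob k be.
transitivity (\prod_(t : 'I_N) \prod_(i : 'I_n) \prod_(be : 'I_b) w t i be).
  rewrite exchange_big /= !pair_bigA /=.
  by apply: eq_bigr => -[[i t] be] _; rewrite ffunE.
apply: eq_bigr => t _; rewrite pair_bigA.
by apply: eq_bigr => -[i be].
Qed.

Definition active_set (act : 'I_n -> option nat) t := [set i | active act i t].

Definition single_sender (A : {set 'I_n}) (u : round_outcome) (be : 'I_b) :=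
  #|[set i in A | u (i, be)]| == 1%N.

Definition silent_round (A : {set 'I_n}) (u : round_outcome) :=
  [forall be, ~~ single_sender A u be].

Lemma woken_outcome_of_rounds N act (f : {ffun 'I_N -> round_outcome}) :
  woken_within act (outcome_of_rounds f) =
  ~~ [forall t : 'I_N, silent_round (active_set act t) (f t)].
Proof.
rewrite /woken_within negb_forall; apply: eq_existsb => t.
rewrite negb_forall; apply: eq_existsb => be; rewrite negbK /heard /single_sender.
by congr (_ == _); apply: eq_card => i; rewrite !inE ffunE.
Qed.

Lemma prob_woken_rounds N k act :
  prob_woken N k b act =
  1 - \prod_(t : 'I_N) \sum_(u | silent_round (active_set act t) u) round_weight k u.
Proof.
have woken_compl := sum_bern_weight_predC
  (fun x : 'I_n * 'I_N * 'I_b => chan_prob k x.2) (woken_within act).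
rewrite /prob_woken -[LHS](subKr 1) -woken_compl; congr (1 - _).
rewrite (reindex (@outcome_of_rounds N)) /=; last first.
  by exists (@rounds_of_outcome N) => om _;
    [apply: outcome_of_roundsK | apply: rounds_of_outcomeK].
under [RHS]eq_bigr => t _ do rewrite big_mkcond.
rewrite bigA_distr_bigA /= big_mkcond /=; apply: eq_bigr => f _.
by rewrite woken_outcome_of_rounds negbK prodr_if0 -weight_outcome_of_rounds.
Qed.

Lemma prob_single_sender k (A : {set 'I_n}) (be : 'I_b) :
  \sum_(u | single_sender A u be) round_weight k u =
  #|A|%:R * (chan_prob k be * (1 - chan_prob k be) ^+ #|A|.-1).
Proof.
pose senders (u : round_outcome) := [set i in A | u (i, be)].
pose S := [pred x : 'I_n * 'I_b | (x.1 \in A) && (x.2 == be)].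
have cylinderE (u : round_outcome) j : j \in A ->
    [forall x in S, u x == (x.1 == j)] = (senders u == [set j]).
  move=> jA; apply/forall_inP/eqP => [uS | uj].
    apply/setP => i; rewrite !inE; have [iA|iA] /= := boolP (i \in A).
      by apply/eqP; apply: (uS (i, be)); rewrite inE /= iA eqxx.
    by apply/esym/negbTE; apply: contraNneq iA => ->.
  move=> -[i be'] /andP[/= iA /eqP ->]; have /setP/(_ i) := uj.
  by rewrite !inE iA /= => ->.
transitivity (\sum_(j in A) \sum_(u | senders u == [set j]) round_weight k u).
  under [RHS]eq_bigr => j _ do rewrite big_mkcond.
  rewrite exchange_big big_mkcond /=; apply: eq_bigr => u _.
  rewrite /single_sender -/(senders u).
  have [/cards1P [j0 sj0] | not_single] := boolP (#|senders u| == 1%N).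
    have j0A : j0 \in A by have := set11 j0; rewrite -sj0 inE => /andP[].
    rewrite (bigD1 j0) //= sj0 eqxx big1 ?addr0 // => j /andP[_ j0j].
    by rewrite (inj_eq set1_inj) eq_sym (negbTE j0j).
  rewrite big1 // => j _; case: eqP => // sj.
  by move: not_single; rewrite sj cards1.
rewrite (eq_bigr (fun _ => chan_prob k be * (1 - chan_prob k be) ^+ #|A|.-1)).
  by rewrite sumr_const mulr_natl.
move=> j jA.
rewrite (eq_bigl (fun u : round_outcome => [forall x in S, u x == (x.1 == j)]));
  last by move=> u; rewrite cylinderE.
rewrite sum_bern_weight_cylinder.
transitivity (\prod_(i in A) \prod_(be' | be' == be)
   (if i == j then chan_prob k be' else 1 - chan_prob k be')).
  by rewrite pair_big.
rewrite (bigD1 j) //= big_pred1_eq eqxx; congr (_ * _).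
rewrite (eq_bigr (fun _ => 1 - chan_prob k be)); last first.
  by move=> i /andP[_ /negbTE ij]; rewrite big_pred1_eq ij.
rewrite prodr_const (cardsD1 j A) jA add1n /=.
by congr (_ ^+ _); apply: eq_card => i; rewrite !inE andbC.
Qed.

End Rounds.

Lemma chan_prob_itv k b (be : 'I_b) : (1 <= k)%N -> 0 <= chan_prob k be <= 1.
Proof.
move=> k1; rewrite /chan_prob powR_ge0 /=.
rewrite -[X in _ <= X](powRr0 k%:R); apply: ler_powR; first by rewrite ler1n.
by rewrite oppr_le0 divr_ge0.
Qed.

Lemma expR_Ndiv_le_subr (p : RR) : 0 <= p < 1 -> expR (- (p / (1 - p))) <= 1 - p.
Proof.
move=> /andP[p0 p1]; have q0 : 0 < 1 - p by rewrite subr_gt0.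
rewrite expRN -[X in _ <= X]invrK lef_pV2 ?posrE ?invr_gt0 ?expR_gt0 //.
apply: le_trans (expR_ge1Dx _); rewrite le_eqVlt; apply/orP; left; apply/eqP.
by field; rewrite gt_eqF.
Qed.

Lemma expRN1_le_subrX (p : RR) m : 0 <= p -> m.+1%:R * p <= 1 -> expR (-1) <= (1 - p) ^+ m.
Proof.
case: m => [|m] p0 mp; first by rewrite expr0 expR_le1 oppr_le0.
have p1 : p < 1.
  have : 2 <= m.+2%:R :> RR by rewrite ler_nat.
  nra.
have q0 : 0 < 1 - p by rewrite subr_gt0.
apply: le_trans (_ : expR (- (p / (1 - p))) ^+ m.+1 <= _); last first.
  by rewrite lerXn2r ?nnegrE ?expR_ge0 ?(ltW q0) // expR_Ndiv_le_subr // p0 p1.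
rewrite -expRM_natl ler_expR mulrN lerN2 mulrA ler_pdivrMr // mul1r.
by move: mp; rewrite -natr1 mulrDl mul1r -lerBrDr.
Qed.

Lemma exists_balanced_channel k b m : (1 <= k)%N -> (1 <= b)%N -> (1 <= m <= k)%N ->
  exists be : 'I_b,
    powR k%:R (- b%:R^-1) <= m%:R * chan_prob k be <= 1.
Proof.
move=> k1 b1 /andP[m1 mk].
set K : RR := k%:R.
have K0 : 0 < K by rewrite ltr0n.
have b0 : b%:R != 0 :> RR by rewrite pnatr_eq0 -lt0n.
pose covers j := (0 < j)%N && (m%:R <= powR K (j%:R / b%:R)).
have covers_b : covers b by rewrite /covers b1 divff // powRr1 ?(ltW K0) // ler_nat.
case: (ex_minnP (ex_intro covers b covers_b)) => j /andP[j0 mj] jmin.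
have jb : (j.-1 < b)%N by rewrite prednK // jmin.
exists (Ordinal jb); rewrite /chan_prob /= prednK //.
apply/andP; split; last by rewrite powRN ler_pdivrMr ?powR_gt0 // mul1r.
case: j j0 mj jmin {jb} => [//|[|i]] _ mj jmin.
  by rewrite div1r ler_peMl ?powR_ge0 // ler1n.
have : ~~ covers i.+1 by apply/negP => /jmin; rewrite ltnn.
rewrite /covers /= -ltNge.
rewrite -(ltr_pM2r (powR_gt0 (- (i.+2%:R / b%:R)) K0)) -powRD; last first.
  by apply/implyP => _; rewrite gt_eqF.
move/ltW; congr (powR _ _ <= _); rewrite -[i.+2]addn1 natrD; by field.
Qed.

Lemma subrX_le_of_ln (q eps : RR) N : 0 <= q <= 1 -> 0 < eps ->
  ln eps^-1 <= N%:R * q -> (1 - q) ^+ N <= eps.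
Proof.
move=> /andP[q0 q1] eps0 lnN.
apply: le_trans (_ : expR (- q) ^+ N <= _).
  by rewrite lerXn2r ?nnegrE ?subr_ge0 ?expR_ge0 //; apply: expR_ge1Dx.
rewrite -expRM_natl -[X in _ <= X](@lnK _ eps) ?posrE // ler_expR.
by rewrite mulrN lerNl -lnV ?posrE.
Qed.

Lemma prod_le_pow_from N t0 (G : 'I_N -> RR) c : (t0 <= N)%N ->
  (forall t, 0 <= G t <= 1) -> (forall t : 'I_N, (t0 <= t)%N -> G t <= c) ->
  \prod_t G t <= c ^+ (N - t0).
Proof.
move=> t0N G01 Gc.
apply: (@le_trans _ _ (\prod_(t : 'I_N) (if (t0 <= t)%N then c else 1))).
  apply: ler_prod => t _; have /andP[-> G1] := G01 t.
  by case: ifP => // /Gc.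
rewrite -(big_mkord xpredT (fun t => if (t0 <= t)%N then c else 1)).
rewrite (@big_cat_nat _ _ _ t0) //= big_nat_cond big1 ?mul1r; last first.
  by move=> t /andP[/andP[_ tt0] _]; rewrite leqNgt tt0.
rewrite (eq_big_nat _ _ (F2 := fun _ => c)) ?prodr_const_nat //.
by move=> t /andP[-> _].
Qed.

Lemma prob_silent_round_le n k b (A : {set 'I_n}) :
  (1 <= k)%N -> (1 <= b)%N -> (1 <= #|A| <= k)%N ->
  \sum_(u : round_outcome n b | silent_round A u) round_weight k u <=
  1 - powR k%:R (- b%:R^-1) * expR (-1).
Proof.
move=> k1 b1 Ak; have [be /andP[lo hi]] := exists_balanced_channel k1 b1 Ak.
have w0 (u : round_outcome n b) : 0 <= round_weight k u.
  by apply: bern_weight_ge0 => x; apply: chan_prob_itv.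
have := sum_bern_weight_predC (fun x : 'I_n * 'I_b => chan_prob k x.2)
  (fun u => ~~ silent_round A u).
under eq_bigl do rewrite negbK; move=> ->; rewrite lerD2l lerN2.
apply: (@le_trans _ _ (\sum_(u | single_sender A u be) round_weight k u)).
  rewrite prob_single_sender mulrA ler_pM ?powR_ge0 ?expR_ge0 //.
  rewrite expRN1_le_subrX ?prednK //; first by case/andP: (chan_prob_itv be k1).
  by case/andP: Ak.
rewrite [X in X <= _]big_mkcond [X in _ <= X]big_mkcond /=.
apply: ler_sum => u _; case: ifP => [heard | _]; last by case: ifP => // _; apply: w0.
by rewrite ifT //; apply/forallPn; exists be; rewrite negbK.
Qed.

Theorem theorem2 :
  exists C : RR, 0 < C /\
  forall (n k b : nat) (act : 'I_n -> option nat) (t0 : nat) (eps : RR),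
    (1 <= k)%N -> (1 <= b)%N ->
    (#|[set i : 'I_n | act i != None]| <= k)%N ->
    (exists i, act i = Some t0) ->
    (forall i a, act i = Some a -> (t0 <= a)%N) ->
    0 < eps < 1 ->
    forall T : nat,
      C * powR (k%:R) (b%:R^-1) * ln (eps^-1) < T%:R + 1 ->
      1 - eps <= prob_woken (t0 + T).+1 k b act.
Proof.
exists (expR 1); split; first exact: expR_gt0.
move=> n k b act t0 eps k1 b1 actk [i0 act_i0] _ /andP[eps0 _] T T_large.
pose q : RR := powR k%:R (- b%:R^-1) * expR (-1).
have x0 : 0 < powR (k%:R : RR) b%:R^-1 by apply: powR_gt0; rewrite ltr0n.
have qx : q * (expR 1 * powR k%:R b%:R^-1) = 1.
  by rewrite /q powRN expRN; field; rewrite !gt_eqF ?expR_gt0.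
have q0 : 0 < q by rewrite mulr_gt0 ?expR_gt0 //; apply: powR_gt0; rewrite ltr0n.
have q01 : 0 <= q <= 1.
  rewrite ltW //= /q mulr_ile1 ?powR_ge0 ?expR_ge0 ?expR_le1 ?oppr_le0 //.
  rewrite -[X in _ <= X](powRr0 k%:R) ler_powR ?ler1n //.
  by rewrite oppr_le0 invr_ge0.
have silent_le (t : 'I_(t0 + T).+1) : (t0 <= t)%N ->
    \sum_(u : round_outcome n b | silent_round (active_set act t) u)
      round_weight k u <= 1 - q.
  move=> t0t; apply: prob_silent_round_le => //; apply/andP; split.
    by apply/card_gt0P; exists i0; rewrite inE /active act_i0.
  apply: leq_trans actk; apply: subset_leq_card; apply/subsetP => i.
  by rewrite !inE /active; case: (act i).
rewrite prob_woken_rounds lerD2l lerN2.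
apply: le_trans (prod_le_pow_from _ _ silent_le) _.
- by rewrite leqW // leq_addr.
- by move=> t; apply: sum_bern_weight_itv => x; apply: chan_prob_itv.
rewrite -addnS addKn; apply: subrX_le_of_ln => //.
have -> : ln eps^-1 = q * (expR 1 * powR k%:R b%:R^-1 * ln eps^-1).
  by rewrite mulrA qx mul1r.
by rewrite -natr1 [_ * q]mulrC ler_pM2l ?(ltW T_large).
Qed.
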